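(* Let $D$ be a $3$-dicritical semi-complete digraph. Then every arc $a$ of $D$ either belongs to a digon or is contained in an induced directed triangle of $D$.
   Context: Digraphs have no loops or parallel arcs; a digon is a pair of arcs $uv,vu$. A $2$-dicolouring is a map to $\{1,2\}$ whose colour classes induce acyclic subdigraphs. $D$ is $3$-dicritical if $D$ has no $2$-dicolouring but every proper subdigraph has one. $D$ is semi-complete if every two distinct vertices are joined by at least one arc. An induced directed triangle is a set of three vertices $x,y,z$ such that the subdigraph induced by them has exactly the arcs $xy,yz,zx$. *)

From mathcomp Require Import all_boot.
Set Implicit Arguments. Unset Strict Implicit. Unset Printing Implicit Defensive.

(* A digraph on a finite vertex type V: an arc relation [a] that is
   irreflexive (no loops); parallel arcs are impossible by construction. *)

Definition loopless (V : finType) (a : rel V) : Prop := forall x, ~~ a x x.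

Definition dicycle_in (V : finType) (A : rel V) (X : {set V}) (s : seq V) : bool :=
  [&& s != [::], uniq s, all (mem X) s & cycle A s].

Definition acyclic_in (V : finType) (A : rel V) (X : {set V}) : Prop :=
  forall s : seq V, ~~ dicycle_in A X s.

Definition two_dicolouring (V : finType) (S : {set V}) (A : rel V)
  (c : V -> bool) : Prop :=
  forall b : bool, acyclic_in A [set x in S | c x == b].

Definition two_dicolourable (V : finType) (S : {set V}) (A : rel V) : Prop :=
  exists c : V -> bool, two_dicolouring S A c.

Definition subdigraph (V : finType) (a : rel V) (S : {set V}) (A : rel V) : Prop :=
  forall x y, A x y -> [/\ x \in S, y \in S & a x y].

Definition proper_subdigraph (V : finType) (a : rel V) (S : {set V}) (A : rel V)
  : Prop :=
  subdigraph a S A /\ (S != setT \/ exists x y, a x y /\ ~~ A x y).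

Definition dicritical3 (V : finType) (a : rel V) : Prop :=
  ~ two_dicolourable setT a /\
  forall S A, proper_subdigraph a S A -> two_dicolourable S A.

Definition semi_complete (V : finType) (a : rel V) : Prop :=
  forall x y, x != y -> a x y || a y x.

Definition induced_directed_triangle (V : finType) (a : rel V) (x y z : V) : Prop :=
  [/\ uniq [:: x; y; z], a x y, a y z, a z x & [/\ ~~ a y x, ~~ a z y & ~~ a x z]].

(* Delete the arc uv (with vu not an arc) and 2-dicolour what remains; since D
   itself is not 2-dicolourable, some colour class spans a dicycle of D, and
   every such dicycle passes through uv.  In a semi-complete digraph a chord
   always shortens a dicycle of length at least 4, so the class contains a
   dicycle of length 2 or 3 through uv.  It cannot be a digon since vu is not
   an arc, so it is a triangle uvw; it is induced because a digon on vw or uw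
   would be a dicycle of the class avoiding uv. *)

From mathcomp Require Import all_boot.
From Stdlib Require Import Classical.

Set Implicit Arguments.
Unset Strict Implicit.
Unset Printing Implicit Defensive.

Section Dicycles.

Variable V : finType.
Implicit Types (a A : rel V) (X : {set V}) (s : seq V).

Definition delete_arc a (u v : V) : rel V :=
  [rel x y | a x y && ((x, y) != (u, v))].

Lemma delete_arc_proper a u v :
  a u v -> proper_subdigraph a setT (delete_arc a u v).
Proof.
move=> auv; split; first by move=> x y /andP [axy _]; rewrite !inE.
by right; exists u, v; rewrite /delete_arc /= auv eqxx.
Qed.

Lemma dicycle_in_rot n A X s : dicycle_in A X (rot n s) = dicycle_in A X s.
Proof.
rewrite /dicycle_in -!size_eq0 size_rot rot_uniq rot_cycle.
by rewrite (perm_all _ (permEl (perm_rot n s))).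
Qed.

Lemma dicycle_in_digon A X p q :
  p \in X -> q \in X -> p != q -> A p q -> A q p -> dicycle_in A X [:: p; q].
Proof. by move=> pX qX npq Apq Aqp; rewrite /dicycle_in /= inE npq pX qX Apq Aqp. Qed.

Lemma not_dicolouring_dicycle (S : {set V}) A (c : V -> bool) :
  ~ two_dicolouring S A c ->
  exists b s, dicycle_in A [set x in S | c x == b] s.
Proof.
move=> not_col; apply: NNPP => no_cycle; apply: not_col => b s.
by apply/negP => cyc; apply: no_cycle; exists b, s.
Qed.

Lemma dicycle_in_chord a X x0 x1 x2 x3 t :
  semi_complete a -> dicycle_in a X [:: x0, x1, x2, x3 & t] ->
  dicycle_in a X [:: x0; x1; x2] \/ dicycle_in a X [:: x0, x2, x3 & t].
Proof.
move=> sc /and4P [_ U Xs cyc].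
have all_sub s' : subseq s' [:: x0, x1, x2, x3 & t] -> all (mem X) s'.
  by move=> sub; apply/allP => x /(mem_subseq sub); apply: (allP Xs).
have n02 : x0 != x2 by move: U; rewrite /= !inE !negb_or => /and3P [/and3P [_ ->]].
case/orP: (sc _ _ n02) => a02; [right | left].
- have sub : subseq [:: x0, x2, x3 & t] [:: x0, x1, x2, x3 & t].
    exact: (cat_subseq (subseq_refl [:: x0]) (subseq_cons _ x1)).
  rewrite /dicycle_in (subseq_uniq sub U) all_sub //.
  by move: cyc; rewrite /cycle /= a02 => /and3P [_ _ ->].
- have sub : subseq [:: x0; x1; x2] [:: x0, x1, x2, x3 & t].
    exact: (prefix_subseq [:: x0; x1; x2]).
  rewrite /dicycle_in (subseq_uniq sub U) all_sub //.
  by move: cyc; rewrite /cycle /= a02 => /and3P [-> -> _].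
Qed.

Lemma semi_complete_short_dicycle a X s :
  semi_complete a -> dicycle_in a X s ->
  exists2 s', dicycle_in a X s' & size s' <= 3.
Proof.
move=> sc; elim: {s}(size s) {-2}s (leqnn (size s)) => [|n IH] s.
  by case: s.
case: s => [|x0 [|x1 [|x2 [|x3 t]]]] size_s cyc; try by exists [::].
- by exists [:: x0].
- by exists [:: x0; x1].
- by exists [:: x0; x1; x2].
case: (dicycle_in_chord sc cyc) => [|cyc']; first by exists [:: x0; x1; x2].
by apply: IH cyc'.
Qed.

Lemma dicycle_uses_arc a X s u v :
  u != v -> dicycle_in a X s -> ~~ dicycle_in (delete_arc a u v) X s ->
  exists n t, rot n s = [:: u, v & t].
Proof.
move=> nuv /and4P [s_nil U Xs cyc].
rewrite /dicycle_in /delete_arc cycle_relI s_nil U Xs cyc /= => uses_uv.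
have /hasP [x xs] : has (fun x => (x, next s x) == (u, v)) s.
  apply: contraNT uses_uv => /hasPn avoids_uv.
  by apply: (cycle_from_next U) => x /avoids_uv.
rewrite xpair_eqE => /andP [/eqP ux /eqP next_u]; subst x.
case: (rot_to xs) => n s' rot_s; exists n.
move: (next_rot n U u); rewrite rot_s next_u.
case: s' {rot_s} => [|w t] /=; rewrite eqxx.
  by move=> u_v; rewrite u_v eqxx in nuv.
by move=> <-; exists t.
Qed.

Lemma induced_triangle_of_dicycle a X u v w :
  ~~ a v u -> acyclic_in (delete_arc a u v) X -> dicycle_in a X [:: u; v; w] ->
  induced_directed_triangle a u v w.
Proof.
move=> avu acyc /and4P [_ U /and4P [uX vX wX _] /and4P [auv avw awu _]].
have no_digon p q : p \in X -> q \in X -> p != q ->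
    (p, q) != (u, v) -> (q, p) != (u, v) -> a p q -> ~~ a q p.
  move=> pX qX npq npq_uv nqp_uv apq; apply/negP => aqp.
  suff : dicycle_in (delete_arc a u v) X [:: p; q] by rewrite (negbTE (acyc _)).
  by apply: dicycle_in_digon; rewrite // /delete_arc /= ?apq ?aqp.
move: (U); rewrite /= !inE !negb_or andbT => /andP [/andP [nuv nuw] nvw].
have [nvu nwu nwv] : [/\ v != u, w != u & w != v] by split; rewrite eq_sym.
split=> //; split=> //; [apply: (no_digon v w) | apply: (no_digon w u)] => //.
all: by rewrite ?xpair_eqE ?(negbTE nvu) ?(negbTE nwu) ?(negbTE nwv) ?andbF.
Qed.

End Dicycles.

Theorem lemma14 (V : finType) (a : rel V) :
  loopless a -> semi_complete a -> dicritical3 a ->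
  forall u v : V, a u v ->
    a v u \/ exists w : V, induced_directed_triangle a u v w.
Proof.
move=> loopless_a sc [not_col crit] u v auv.
case avu: (a v u); [by left | right].
have [c col] := crit _ _ (delete_arc_proper auv).
have [b [s cyc]] : exists b s, dicycle_in a [set x in setT | c x == b] s.
  by apply: not_dicolouring_dicycle => col_a; apply: not_col; exists c.
have [s' cyc' size_s'] := semi_complete_short_dicycle sc cyc.
have nuv : u != v by apply: contraTneq auv => ->; apply: loopless_a.
have [n [t rot_s']] := dicycle_uses_arc nuv cyc' (col b s').
move: cyc' size_s'; rewrite -(dicycle_in_rot n) -(size_rot n) rot_s'.
case: t {rot_s'} => [|w [|? ?]] // cyc_uvw _; last first.
  by exists w; apply: induced_triangle_of_dicycle (col b) cyc_uvw; rewrite avu.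
by move: cyc_uvw => /and4P [_ _ _]; rewrite /cycle /= avu andbF.
Qed.
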